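(* Consider the distributed detection model described in the context, with fixed $N\ge 1$, priors $P_0,P_1\in(0,1)$, and local operating point $0<P_f<P_d<1$. Say that the fusion center is blind for a triple $(\alpha,P_{1,0},P_{0,1})\in[0,1]^3$ if $P(H_i\mid \mathbf u)=P(H_i)$ for $i=0,1$ and every $\mathbf u\in\{0,1\}^N$ (equivalently $P(\mathbf u\mid H_0)=P(\mathbf u\mid H_1)$ for all $\mathbf u$). Then the smallest fraction $\alpha\in[0,1]$ for which there exist Byzantine flipping probabilities $(P_{1,0},P_{0,1})\in[0,1]^2$ making the fusion center blind is $\alpha_{blind}=1/2$.
   Context: Binary hypothesis test between $H_0$ (signal absent) and $H_1$ (signal present) with prior probabilities $P_0=P(H_0)$, $P_1=P(H_1)$, $P_0+P_1=1$. There are $N$ sensors; each sensor $i$ makes a local binary decision $v_i\in\{0,1\}$, and, conditionally on the hypothesis, the $v_i$ are i.i.d. with $P(v_i=1\mid H_1)=P_d$, $P(v_i=1\mid H_0)=P_f$. Each sensor, independently, is a Byzantine with probability $\alpha\in[0,1]$ (and honest otherwise). An honest node sends $u_i=v_i$ to the fusion center. A Byzantine node sends $u_i=1$ with probability $P_{1,0}$ when $v_i=0$ and sends $u_i=0$ with probability $P_{0,1}$ when $v_i=1$ (so it sends $u_i=1$ with probability $1-P_{0,1}$ when $v_i=1$). Consequently, conditionally on $H_j$, the $u_i$ are i.i.d. Bernoulli with $P(u_i=1\mid H_0)=\pi_{1,0}=\alpha(P_{1,0}(1-P_f)+(1-P_{0,1})P_f)+(1-\alpha)P_f$ and $P(u_i=1\mid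 H_1)=\pi_{1,1}=\alpha(P_{1,0}(1-P_d)+(1-P_{0,1})P_d)+(1-\alpha)P_d$. The fusion center observes $\mathbf u=(u_1,\dots,u_N)$. *)

From mathcomp Require Import all_boot all_order all_algebra.
Set Implicit Arguments. Unset Strict Implicit. Unset Printing Implicit Defensive.
Import Order.TTheory GRing.Theory Num.Theory.
Local Open Scope ring_scope.

Section Model.
Variable R : realFieldType.

(* P(u_i = 1 | H_0) *)
Definition pi10 (Pf alpha P10 P01 : R) : R :=
  alpha * (P10 * (1 - Pf) + (1 - P01) * Pf) + (1 - alpha) * Pf.

(* P(u_i = 1 | H_1) *)
Definition pi11 (Pd alpha P10 P01 : R) : R :=
  alpha * (P10 * (1 - Pd) + (1 - P01) * Pd) + (1 - alpha) * Pd.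

Definition lik (N : nat) (p : R) (u : 'I_N -> bool) : R :=
  \prod_(i < N) (if u i then p else 1 - p).

Definition likH0 (N : nat) (Pf alpha P10 P01 : R) (u : 'I_N -> bool) : R :=
  lik (pi10 Pf alpha P10 P01) u.
Definition likH1 (N : nat) (Pd alpha P10 P01 : R) (u : 'I_N -> bool) : R :=
  lik (pi11 Pd alpha P10 P01) u.

Definition post0 (N : nat) (P0 P1 Pf Pd alpha P10 P01 : R) (u : 'I_N -> bool) : R :=
  P0 * likH0 Pf alpha P10 P01 u /
  (P0 * likH0 Pf alpha P10 P01 u + P1 * likH1 Pd alpha P10 P01 u).
Definition post1 (N : nat) (P0 P1 Pf Pd alpha P10 P01 : R) (u : 'I_N -> bool) : R :=
  P1 * likH1 Pd alpha P10 P01 u /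
  (P0 * likH0 Pf alpha P10 P01 u + P1 * likH1 Pd alpha P10 P01 u).

Definition blind (N : nat) (P0 P1 Pf Pd alpha P10 P01 : R) : Prop :=
  forall u : 'I_N -> bool,
    post0 P0 P1 Pf Pd alpha P10 P01 u = P0 /\
    post1 P0 P1 Pf Pd alpha P10 P01 u = P1.

Definition blinding_alpha (N : nat) (P0 P1 Pf Pd alpha : R) : Prop :=
  0 <= alpha <= 1 /\
  exists P10 P01 : R, 0 <= P10 <= 1 /\ 0 <= P01 <= 1 /\
    blind N P0 P1 Pf Pd alpha P10 P01.

End Model.

From mathcomp Require Import all_boot all_order all_algebra.
From mathcomp Require Import ring lra.
Import Order.TTheory GRing.Theory Num.Theory.
Set Implicit Arguments. Unset Strict Implicit. Unset Printing Implicit Defensive.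
Local Open Scope ring_scope.

(* The reports are i.i.d. Bernoulli(pi10) under H_0 and Bernoulli(pi11) under
   H_1, and pi11 - pi10 = (Pd - Pf) (1 - alpha (P10 + P01)).  Blindness at the
   all-ones report gives pi10^N = pi11^N, hence pi10 = pi11, hence
   alpha (P10 + P01) = 1; as P10 + P01 <= 2 this forces alpha >= 1/2.
   Conversely alpha = 1/2 with P10 = P01 = 1 makes both report laws
   Bernoulli(1/2), so every likelihood ratio is 1. *)

Section Blindness.
Variable R : realFieldType.
Implicit Types (N : nat) (p : R).

(* [pi11 Pd] is convertible to [pi10 Pd], so facts about [pi10 p] serve both. *)
Lemma pi10_ge0 (p alpha P10 P01 : R) :
  0 <= p <= 1 -> 0 <= alpha <= 1 -> 0 <= P10 <= 1 -> 0 <= P01 <= 1 ->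
  0 <= pi10 p alpha P10 P01.
Proof.
move=> /andP[p0 p1] /andP[a0 a1] /andP[q0 q1] /andP[r0 r1].
rewrite /pi10; apply: addr_ge0; apply: mulr_ge0; try lra.
by apply: addr_ge0; apply: mulr_ge0; lra.
Qed.

Lemma pi10_half_flip_all p : pi10 p (1 / 2) 1 1 = 1 / 2.
Proof. by rewrite /pi10; field. Qed.

Lemma pi11_sub_pi10 (Pf Pd alpha P10 P01 : R) :
  pi11 Pd alpha P10 P01 - pi10 Pf alpha P10 P01
  = (Pd - Pf) * (1 - alpha * (P10 + P01)).
Proof. by rewrite /pi10 /pi11; ring. Qed.

Lemma lik_all_true N p : lik p (fun _ : 'I_N => true) = p ^+ N.
Proof. by rewrite /lik prodr_const card_ord. Qed.

Lemma lik_neq0 N p (u : 'I_N -> bool) : p != 0 -> 1 - p != 0 -> lik p u != 0.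
Proof. by move=> p0 p1; apply/prodf_neq0 => i _; case: (u i). Qed.

Lemma eq_of_posterior_eq_prior (P0 P1 a b : R) :
  0 < P0 -> 0 < P1 -> P0 + P1 = 1 ->
  P0 * a / (P0 * a + P1 * b) = P0 -> a = b.
Proof.
move=> P0p P1p sumP post.
have D : P0 * a + P1 * b != 0.
  by apply/eqP => D; move: post; rewrite D invr0 mulr0 => /esym/eqP; rewrite gt_eqF.
have E := congr1 (fun x => x * (P0 * a + P1 * b)) post.
rewrite /= divfK // in E.
have key : P0 * P1 * (a - b) = P0 * (P0 + P1) * a - P0 * (P0 * a + P1 * b).
  by ring.
rewrite sumP mulr1 -E subrr in key.
by move/eqP: key; rewrite !mulf_eq0 subr_eq0 (gt_eqF P0p) (gt_eqF P1p) => /eqP.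
Qed.

Lemma posterior_eq_prior_of_eq (P0 P1 a : R) :
  P0 + P1 = 1 -> a != 0 -> P0 * a / (P0 * a + P1 * a) = P0.
Proof. by move=> sumP a0; rewrite -mulrDl sumP mul1r mulfK. Qed.

Lemma blind_pi_eq N (P0 P1 Pf Pd alpha P10 P01 : R) :
  (1 <= N)%N -> 0 < P0 -> 0 < P1 -> P0 + P1 = 1 ->
  0 <= pi10 Pf alpha P10 P01 -> 0 <= pi11 Pd alpha P10 P01 ->
  blind N P0 P1 Pf Pd alpha P10 P01 ->
  pi10 Pf alpha P10 P01 = pi11 Pd alpha P10 P01.
Proof.
move=> N1 P0p P1p sumP p0 p1 /(_ (fun _ => true)) [post _].
have := eq_of_posterior_eq_prior P0p P1p sumP post.
rewrite /likH0 /likH1 !lik_all_true => /eqP.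
by rewrite (eqrXn2 N1 p0 p1) => /eqP.
Qed.

Lemma blind_half_flip_all N (P0 P1 Pf Pd : R) :
  P0 + P1 = 1 -> blind N P0 P1 Pf Pd (1 / 2) 1 1.
Proof.
move=> sumP u.
have half_neq0 : 1 / 2 != 0 :> R by apply/eqP; lra.
have half_co_neq0 : 1 - 1 / 2 != 0 :> R by apply/eqP; lra.
rewrite /post0 /post1 /likH0 /likH1 pi10_half_flip_all.
rewrite (pi10_half_flip_all Pd : pi11 Pd (1 / 2) 1 1 = 1 / 2).
have L := lik_neq0 u half_neq0 half_co_neq0.
split; first exact: posterior_eq_prior_of_eq.
by rewrite addrC; apply: posterior_eq_prior_of_eq; rewrite // addrC.
Qed.

Lemma pi_eq_flip_mass (Pf Pd alpha P10 P01 : R) :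
  Pf < Pd -> pi10 Pf alpha P10 P01 = pi11 Pd alpha P10 P01 ->
  alpha * (P10 + P01) = 1.
Proof.
move=> lt_fd /eqP; rewrite eq_sym -subr_eq0 pi11_sub_pi10 mulf_eq0.
by rewrite subr_eq0 gt_eqF //= subr_eq0 => /eqP/esym.
Qed.

Lemma flip_mass_half_le (alpha P10 P01 : R) :
  0 <= alpha -> P10 <= 1 -> P01 <= 1 -> alpha * (P10 + P01) = 1 -> 1 / 2 <= alpha.
Proof.
move=> a0 q1 r1 mass.
have : alpha * (P10 + P01) <= alpha * 2 by apply: ler_wpM2l => //; lra.
lra.
Qed.

End Blindness.

Theorem lemma1 (R : realFieldType) (N : nat) (P0 P1 Pf Pd : R) :
  (1 <= N)%N -> 0 < P0 < 1 -> 0 < P1 < 1 -> P0 + P1 = 1 ->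
  0 < Pf -> Pf < Pd -> Pd < 1 ->
  blinding_alpha N P0 P1 Pf Pd (1 / 2) /\
  (forall alpha : R, blinding_alpha N P0 P1 Pf Pd alpha -> 1 / 2 <= alpha).
Proof.
move=> N1 /andP[P0p _] /andP[P1p _] sumP Pfp lt_fd Pd1.
split.
  split; first by apply/andP; split; lra.
  exists 1, 1; do 2 (split; first by apply/andP; split; lra).
  exact: blind_half_flip_all.
move=> alpha [alpha01 [P10 [P01 [P10_01 [P01_01 bl]]]]].
have Pf01 : 0 <= Pf <= 1 by apply/andP; split; lra.
have Pd01 : 0 <= Pd <= 1 by apply/andP; split; lra.
have pe := blind_pi_eq N1 P0p P1p sumP (pi10_ge0 Pf01 alpha01 P10_01 P01_01)
  (pi10_ge0 Pd01 alpha01 P10_01 P01_01) bl.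
move: alpha01 P10_01 P01_01 => /andP[a0 _] /andP[_ q1] /andP[_ r1].
exact: flip_mass_half_le a0 q1 r1 (pi_eq_flip_mass lt_fd pe).
Qed.
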